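(* Let $\gamma_1,\gamma_2\in\mathbb{C}$ with $\mathrm{Re}(\gamma_i)>0$, let $H^i(s)=\gamma_i/(s+\gamma_i)$ with impulse responses $h^i_t=\gamma_ie^{-\gamma_it}$ ($t\ge0$), and let $H=H^1H^2$ with impulse response $h=h^1*h^2$. Let $g\colon\mathbb{R}_+\to\mathbb{C}$ be twice continuously differentiable and bounded, with $\|g\|_\infty=\sup_t|g_t|$, and set $\hat g^{(m)}_t=\int_0^th_{t-\tau}g^{(m)}_\tau\,d\tau$, where $g^{(m)}$ is the $m$-th derivative. Then, as $t\to\infty$, $$|\hat g^{(1)}_t|\le|\gamma_1|\big(\|h^2\|_1+\|h\|_1\big)\|g\|_\infty+o(1),\qquad |\hat g^{(2)}_t|\le|\gamma_1\gamma_2|\big(1+\|h^1\|_1+\|h^2\|_1+\|h\|_1\big)\|g\|_\infty+o(1),$$ where $\|\cdot\|_1$ is the $L_1(\mathbb{R}_+)$ norm and $o(1)$ denotes a term (depending on $g$) that vanishes as $t\to\infty$. In the special case $H(s)=\gamma^2/(s^2+2\zeta\gamma s+\gamma^2)$ with $\gamma>0$ and $0<\zeta\le1$ (i.e. $-\gamma_1,-\gamma_2$ the roots of $s^2+2\zeta\gamma s+\gamma^2$), $$\|h^2\|_1=\|h^1\|_1\le\frac1\zeta,\qquad \|h\|_1\le\frac1{\zeta^2}.$$ *)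

From Stdlib Require Import Reals.
From Coquelicot Require Import Coquelicot.
Open Scope R_scope.

Definition Cexp (z : C) : C :=
  (exp (fst z) * cos (snd z), exp (fst z) * sin (snd z)).

(* impulse response of gam/(s+gam):  t |-> gam e^{-gam t} (used for t >= 0) *)
Definition impulse1 (gam : C) (t : R) : C :=
  Cmult gam (Cexp (Cmult (RtoC (- t)) gam)).

Definition conv (f1 f2 : R -> C) (t : R) : C :=
  @RInt C_R_CompleteNormedModule (fun tau => Cmult (f1 (t - tau)) (f2 tau)) 0 t.

Definition L1norm (f : R -> C) : R :=
  RInt_gen (fun t => Cmod (f t)) (at_point 0) (Rbar_locally p_infty).

Definition supnorm (f : R -> C) : R :=
  real (Lub_Rbar (fun r => exists t, 0 <= t /\ r = Cmod (f t))).

(* hat g^{(m)}_t = int_0^t h_{t-tau} g^{(m)}_tau dtau, with gm = g^{(m)} *)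
Definition filt (h gm : R -> C) (t : R) : C :=
  @RInt C_R_CompleteNormedModule (fun tau => Cmult (h (t - tau)) (gm tau)) 0 t.

Definition cont_Rplus (f : R -> C) (t : R) : Prop :=
  filterlim f (within (fun x => 0 <= x) (locally t)) (locally (f t)).

(* Integrating by parts moves the derivatives of g onto the kernel:
   ĝ^(1)_t = h_0 g_t - h_t g_0 + ∫_0^t h'_{t-τ} g_τ dτ, and twice for ĝ^(2).
   At τ = t the boundary term is h_0 g_t = 0, resp. h'_0 g_t = γ1 γ2 g_t; at τ = 0 it is a
   multiple of h_t or h'_t, which decay like t e^{-a t} with a = min Re γi: these make up
   the o(1).
   The kernel solves the first-order filter equations h' = γ1 (h^2 - h) = γ2 (h^1 - h), so
   h'' = -γ1 γ2 (h^1 + h^2 - h), and the L1 norms of h' and h'' are bounded by those of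
   h^1, h^2 and h.
   In the special case γ1 and γ2 are conjugate with real part ζγ and modulus γ; hence
   ‖h^i‖_1 = |γi| / Re γi = 1/ζ, and |h_t| ≤ γ^2 t e^{-ζγ t} gives ‖h‖_1 ≤ 1/ζ^2. *)

From Stdlib Require Import Reals Lra Psatz.
From Coquelicot Require Import Coquelicot.
Open Scope R_scope.

(** * Calculus of complex-valued functions of a real variable *)

Lemma norm_Cmod (z : C) : @norm R_AbsRing C_R_NormedModule z = Cmod z.
Proof. symmetry; apply Cmod_norm. Qed.

Lemma is_derive_C (f : R -> C) (x : R) (l : C) :
  is_derive f x l <->
  is_derive (fun t => fst (f t)) x (fst l) /\ is_derive (fun t => snd (f t)) x (snd l).
Proof.
  split.
  - intros Hf; split.
    + exact (filterdiff_comp f (fun p : C_R_NormedModule => fst p) _ (fun p => fst p) Hf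
               (filterdiff_linear _ is_linear_fst)).
    + exact (filterdiff_comp f (fun p : C_R_NormedModule => snd p) _ (fun p => snd p) Hf
               (filterdiff_linear _ is_linear_snd)).
  - intros [H1 H2]. destruct l as [a b].
    apply (is_derive_ext (fun t => (fst (f t), snd (f t)))); [intros t; now destruct (f t)|].
    apply (filterdiff_comp'_2 _ _ (fun p q => (p, q) : C_R_NormedModule) x _ _
             (fun p q => (p, q)) H1 H2), filterdiff_linear.
    apply (is_linear_prod (fun t : R_NormedModule * R_NormedModule => fst t)
             (fun t : R_NormedModule * R_NormedModule => snd t)).
    + apply is_linear_fst.
    + apply is_linear_snd.
Qed.

Lemma is_derive_eq {V : NormedModule R_AbsRing} (f : R -> V) (x : R) (l l' : V) :
  is_derive f x l -> l = l' -> is_derive f x l'.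
Proof. now intros H <-. Qed.

Lemma is_derive_Cmult (f g : R -> C) (x : R) (a b : C) :
  is_derive f x a -> is_derive g x b ->
  is_derive (fun t => (f t * g t)%C) x (a * g x + f x * b)%C.
Proof.
  rewrite !is_derive_C. intros [Hf1 Hf2] [Hg1 Hg2].
  assert (mult_comm : forall n m : R_AbsRing, mult n m = mult m n) by exact Rmult_comm.
  split; simpl.
  - eapply is_derive_eq.
    + exact (is_derive_minus _ _ x _ _ (is_derive_mult _ _ x _ _ Hf1 Hg1 mult_comm)
               (is_derive_mult _ _ x _ _ Hf2 Hg2 mult_comm)).
    + unfold minus, plus, opp, mult; simpl. ring.
  - eapply is_derive_eq.
    + exact (is_derive_plus _ _ x _ _ (is_derive_mult _ _ x _ _ Hf1 Hg2 mult_comm)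
               (is_derive_mult _ _ x _ _ Hf2 Hg1 mult_comm)).
    + unfold plus, mult; simpl. ring.
Qed.

Lemma is_derive_Cmult_l (c : C) (f : R -> C) (x : R) (a : C) :
  is_derive f x a -> is_derive (fun t => (c * f t)%C) x (c * a)%C.
Proof.
  intros Hf. eapply is_derive_eq.
  - apply (is_derive_Cmult (fun _ => c)); [apply is_derive_const | exact Hf].
  - change (RtoC 0 * f x + c * a = c * a)%C. ring.
Qed.

Lemma continuous_C (f : R -> C) (x : R) :
  continuous f x <->
  continuous (fun t => fst (f t)) x /\ continuous (fun t => snd (f t)) x.
Proof.
  split.
  - intros Hf; split; apply (continuous_comp f); auto; destruct (f x).
    + apply (continuous_fst (U := R_UniformSpace) (V := R_UniformSpace)).
    + apply (continuous_snd (U := R_UniformSpace) (V := R_UniformSpace)).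
  - intros [H1 H2].
    apply (continuous_ext (fun t => (fst (f t), snd (f t)))); [intros t; now destruct (f t)|].
    apply (continuous_comp_2 (X := C_UniformSpace) _ _ (fun p q => (p, q)) x H1 H2).
    apply (continuous_ext (fun p : R * R => p)); [now intros []|].
    apply (continuous_id (U := C_UniformSpace)).
Qed.

Lemma continuous_Cmult (f g : R -> C) (x : R) :
  continuous f x -> continuous g x -> continuous (fun t => (f t * g t)%C) x.
Proof.
  rewrite !continuous_C. intros [Hf1 Hf2] [Hg1 Hg2]; split; simpl.
  - apply (continuous_minus (V := R_NormedModule)); apply (continuous_mult (K := R_AbsRing)); auto.
  - apply (continuous_plus (V := R_NormedModule)); apply (continuous_mult (K := R_AbsRing)); auto.
Qed.

Lemma continuous_Cmod (f : R -> C) (x : R) :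
  continuous f x -> continuous (fun t => Cmod (f t)) x.
Proof.
  intros Hf. apply (continuous_ext (fun t => @norm R_AbsRing C_R_NormedModule (f t))).
  { intros t. apply norm_Cmod. }
  apply (continuous_comp f); [exact Hf|].
  exact (filterlim_norm (K := R_AbsRing) (V := C_R_NormedModule) (f x)).
Qed.

Lemma is_derive_continuous_C (f : R -> C) (x : R) (l : C) : is_derive f x l -> continuous f x.
Proof. intros H. exact (ex_derive_continuous (V := C_R_NormedModule) f x (ex_intro _ l H)). Qed.

Lemma continuous_reflect (f : R -> C) (s x : R) :
  (forall y, continuous f y) -> continuous (fun t => f (s - t)) x.
Proof.
  intros Hf. apply (continuous_comp (fun t => s - t) f); auto.
  apply (continuous_minus (V := R_NormedModule)); [apply continuous_const | apply continuous_id].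
Qed.

Lemma is_derive_reflect (K : R -> C) (k : C) (t x : R) :
  is_derive K (t - x) k -> is_derive (fun u => K (t - u)) x (- k)%C.
Proof.
  intros HK. eapply is_derive_eq.
  - apply (is_derive_comp K (fun u => t - u)); [exact HK|].
    apply (is_derive_minus (V := R_NormedModule)); [apply is_derive_const | apply is_derive_id].
  - unfold minus. rewrite plus_zero_l. exact (scal_opp_one (V := C_R_ModuleSpace) k).
Qed.

Lemma RInt_C_correct (f : R -> C) (a b : R) :
  (forall x, continuous f x) -> is_RInt f a b (@RInt C_R_CompleteNormedModule f a b).
Proof.
  intros Hf. apply (RInt_correct (V := C_R_CompleteNormedModule)), ex_RInt_continuous; auto.
Qed.

Lemma RInt_C_unique (f : R -> C) (a b : R) (l : C) :
  is_RInt f a b l -> @RInt C_R_CompleteNormedModule f a b = l.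
Proof. exact (is_RInt_unique (V := C_R_CompleteNormedModule) f a b l). Qed.

Lemma is_RInt_Cmult_l (c : C) (f : R -> C) (a b : R) (l : C) :
  is_RInt f a b l -> is_RInt (fun t => (c * f t)%C) a b (c * l)%C.
Proof.
  intros H.
  pose proof (is_RInt_fct_extend_fst (U := R_NormedModule) (V := R_NormedModule) f a b l H) as H1.
  pose proof (is_RInt_fct_extend_snd (U := R_NormedModule) (V := R_NormedModule) f a b l H) as H2.
  apply (is_RInt_fct_extend_pair (U := R_NormedModule) (V := R_NormedModule)); simpl.
  - exact (is_RInt_minus _ _ a b _ _ (is_RInt_scal _ a b (fst c) _ H1)
             (is_RInt_scal _ a b (snd c) _ H2)).
  - exact (is_RInt_plus _ _ a b _ _ (is_RInt_scal _ a b (fst c) _ H2)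
             (is_RInt_scal _ a b (snd c) _ H1)).
Qed.

Lemma Cmod_RInt_le (f : R -> C) (g : R -> R) (a b : R) (lf : C) (lg : R) :
  a <= b -> (forall x, a <= x <= b -> Cmod (f x) <= g x) ->
  is_RInt f a b lf -> is_RInt g a b lg -> Cmod lf <= lg.
Proof.
  intros Hab Hfg. rewrite <- norm_Cmod.
  apply (norm_RInt_le f g a b lf lg Hab). intros x Hx. rewrite norm_Cmod. auto.
Qed.

Lemma is_RInt_reflect {V : NormedModule R_AbsRing} (f : R -> V) (s : R) (l : V) :
  is_RInt f 0 s l -> is_RInt (fun u => f (s - u)) 0 s l.
Proof.
  intros H. apply is_RInt_swap in H.
  (* write the bounds s and 0 as -1 * 0 + s and -1 * s + s, the shape of [is_RInt_comp_lin] *)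
  rewrite <- (Rplus_0_l s), <- (Rmult_0_r (-1)) in H at 1.
  replace 0 with (-1 * s + s) in H at 2 by ring.
  apply is_RInt_opp, is_RInt_comp_lin in H. rewrite opp_opp in H.
  refine (is_RInt_ext _ _ _ _ _ _ H). intros u _.
  replace (-1 * u + s) with (s - u) by ring.
  rewrite (scal_opp_r (V := NormedModule.ModuleSpace R_AbsRing V)).
  change (-1) with (@opp R_Ring one).
  now rewrite (scal_opp_one (V := NormedModule.ModuleSpace R_AbsRing V)), !opp_opp.
Qed.

Lemma ex_RInt_continuous_R (f : R -> R) (a b : R) : (forall x, continuous f x) -> ex_RInt f a b.
Proof. intros Hf. apply (ex_RInt_continuous (V := R_CompleteNormedModule)). auto. Qed.

Lemma is_RInt_RInt_Cmod (f : R -> C) (t : R) : (forall x, continuous f x) ->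
  is_RInt (fun s => Cmod (f s)) 0 t (RInt (fun s => Cmod (f s)) 0 t).
Proof.
  intros Hf. apply (RInt_correct (V := R_CompleteNormedModule)), ex_RInt_continuous_R.
  intros x. apply continuous_Cmod, Hf.
Qed.

Lemma is_RInt_derive_left_open (f df : R -> C) (a b : R) : a <= b ->
  (forall x, a < x <= b -> is_derive f x (df x)) -> (forall x, continuous df x) ->
  continuous f a -> is_RInt df a b (f b - f a)%C.
Proof.
  intros [Hab | <-] Hd Hdf Hfa.
  2:{ change (f a - f a)%C with (@minus C_R_NormedModule (f a) (f a)).
      rewrite minus_eq_zero. apply is_RInt_point. }
  (* f agrees with J + f b on (a, b], and both sides are right-continuous at a. *)
  set (J := fun x => @RInt C_R_CompleteNormedModule df b x).
  assert (HJ : forall x, is_RInt df b x (J x)) by (intros x; apply RInt_C_correct, Hdf).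
  assert (J_cont : continuous J a).
  { apply (is_derive_continuous_C _ _ (df a)), (is_derive_RInt _ _ b); auto.
    apply filter_forall; auto. }
  assert (f_eq : forall x, a < x <= b -> f x = (J x + f b)%C).
  { intros x Hx.
    assert (FTC : is_RInt df x b (f b - f x)%C).
    { apply (is_RInt_derive (V := C_R_CompleteNormedModule)); auto.
      intros y Hy. rewrite Rmin_left, Rmax_right in Hy by lra. apply Hd; lra. }
    unfold J. rewrite (RInt_C_unique _ _ _ _ (is_RInt_swap _ _ _ _ FTC)).
    change (f x = - (f b - f x) + f b)%C. ring. }
  assert (lim_fa : filterlim f (at_right a) (locally (f a))).
  { exact (filterlim_filter_le_1 _ (filter_le_within _) Hfa). }
  assert (lim_J : filterlim f (at_right a) (locally (J a + f b)%C)).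
  { apply (filterlim_ext_loc (fun x => J x + f b)%C).
    - assert (Hba : 0 < b - a) by lra.
      exists (mkposreal _ Hba). intros y Hy Hay.
      apply Rabs_lt_between' in Hy. symmetry. apply f_eq. simpl in Hy. lra.
    - apply (filterlim_filter_le_1 _ (filter_le_within _)).
      apply (continuous_plus (V := C_R_NormedModule) J (fun _ => f b)); auto.
      apply continuous_const. }
  pose proof (filterlim_locally_unique (V := C_R_NormedModule) f _ _ lim_fa lim_J) as fa_eq.
  rewrite fa_eq. replace (f b - (J a + f b))%C with (- J a)%C by ring.
  exact (is_RInt_swap _ _ _ _ (HJ a)).
Qed.

(** * Improper integrals, sup norms and limits at infinity *)

Lemma RInt_nonneg_mono (f : R -> R) (a b : R) :
  (forall x, continuous f x) -> (forall x, 0 <= x -> 0 <= f x) ->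
  0 <= a <= b -> RInt f 0 a <= RInt f 0 b.
Proof.
  intros Hc Hp Hab. rewrite <- (RInt_Chasles f 0 a b) by apply ex_RInt_continuous_R, Hc.
  assert (0 <= RInt f a b).
  { apply RInt_ge_0; [lra | apply ex_RInt_continuous_R, Hc | intros x Hx; apply Hp; lra]. }
  change (RInt f 0 a <= RInt f 0 a + RInt f a b). lra.
Qed.

Lemma RInt_le_is_RInt_gen (f : R -> R) (L T : R) :
  (forall x, continuous f x) -> (forall x, 0 <= x -> 0 <= f x) ->
  is_RInt_gen f (at_point 0) (Rbar_locally p_infty) L -> 0 <= T -> RInt f 0 T <= L.
Proof.
  intros Hc Hp HL HT.
  apply Rnot_lt_le. intros HLT.
  assert (Heps : 0 < RInt f 0 T - L) by lra.
  destruct (HL (ball L (mkposreal _ Heps))) as [Q R0 HQ [M HM] Himp].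
  { now exists (mkposreal _ Heps). }
  destruct (Himp 0 (Rmax (M + 1) T) HQ) as [y [Hy Hball]].
  { apply HM. pose proof (Rmax_l (M + 1) T). lra. }
  simpl in Hy. rewrite <- (is_RInt_unique _ _ _ _ Hy) in Hball.
  apply Rabs_lt_between' in Hball. simpl in Hball.
  pose proof (RInt_nonneg_mono f T (Rmax (M + 1) T) Hc Hp (conj HT (Rmax_r _ _))). lra.
Qed.

Lemma is_RInt_gen_nonneg_bounded (f : R -> R) (B : R) :
  (forall x, continuous f x) -> (forall x, 0 <= x -> 0 <= f x) ->
  (forall T, 0 <= T -> RInt f 0 T <= B) ->
  exists L, is_RInt_gen f (at_point 0) (Rbar_locally p_infty) L /\ L <= B.
Proof.
  intros Hc Hp HB.
  set (E := fun r => exists T, 0 <= T /\ r = RInt f 0 T).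
  destruct (completeness E) as [L [HLub HLl]].
  { exists B. intros r [T [HT ->]]. auto. }
  { exists (RInt f 0 0), 0. split; [lra | reflexivity]. }
  exists L. split.
  2:{ apply HLl. intros r [T [HT ->]]. auto. }
  intros P [eps HP].
  assert (HT0 : exists T0, 0 <= T0 /\ L - eps < RInt f 0 T0).
  { apply Classical_Prop.NNPP. intros Hn.
    assert (L <= L - eps).
    { apply HLl. intros r [T [HT ->]]. apply Rnot_lt_le. intros HlT. apply Hn. now exists T. }
    pose proof (cond_pos eps). lra. }
  destruct HT0 as [T0 [HT0 HLT0]].
  apply (Filter_prod _ _ _ (fun a => a = 0) (fun b => T0 < b)); [reflexivity | now exists T0 |].
  intros a b -> Hb. exists (RInt f 0 b). split.
  - apply (RInt_correct (V := R_CompleteNormedModule)), ex_RInt_continuous_R, Hc.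
  - apply HP. apply Rabs_lt_between'.
    assert (RInt f 0 T0 <= RInt f 0 b) by (apply RInt_nonneg_mono; auto; lra).
    assert (RInt f 0 b <= L) by (apply HLub; exists b; split; [lra | reflexivity]).
    pose proof (cond_pos eps). simpl. lra.
Qed.

Lemma L1norm_eq (f : R -> C) (L : R) :
  is_RInt_gen (fun t => Cmod (f t)) (at_point 0) (Rbar_locally p_infty) L -> L1norm f = L.
Proof. apply (is_RInt_gen_unique (V := R_CompleteNormedModule)). Qed.

Lemma RInt_Cmod_le_L1norm (f : R -> C) (L T : R) : (forall x, continuous f x) ->
  is_RInt_gen (fun t => Cmod (f t)) (at_point 0) (Rbar_locally p_infty) L ->
  0 <= T -> RInt (fun t => Cmod (f t)) 0 T <= L1norm f.
Proof.
  intros Hf HL HT. rewrite (L1norm_eq f L HL).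
  apply RInt_le_is_RInt_gen; auto.
  - intros x. apply continuous_Cmod, Hf.
  - intros x _. apply Cmod_ge_0.
Qed.

Lemma supnorm_ub (g : R -> C) (M : R) : (forall t, 0 <= t -> Cmod (g t) <= M) ->
  forall t, 0 <= t -> Cmod (g t) <= supnorm g.
Proof.
  intros HM t Ht. unfold supnorm.
  set (E := fun r => exists t, 0 <= t /\ r = Cmod (g t)).
  destruct (Lub_Rbar_correct E) as [Hub Hlub].
  assert (Et : E (Cmod (g t))) by (exists t; auto).
  destruct (Lub_Rbar E) as [r | |]; simpl.
  - exact (Hub _ Et).
  - exfalso. apply (Hlub (Finite M)). intros x [u [Hu ->]]. simpl. auto.
  - exfalso. exact (Hub _ Et).
Qed.

Lemma supnorm_ge0 (g : R -> C) (M : R) : (forall t, 0 <= t -> Cmod (g t) <= M) ->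
  0 <= supnorm g.
Proof.
  intros HM. apply (Rle_trans _ (Cmod (g 0))); [apply Cmod_ge_0|].
  apply (supnorm_ub g M HM). lra.
Qed.

Lemma is_lim_scal_l_0 (f : R -> R) (c : R) (x : Rbar) :
  is_lim f x 0 -> is_lim (fun t => c * f t) x 0.
Proof.
  intros Hf. replace (Finite 0) with (Rbar_mult c 0) by (simpl; f_equal; ring).
  apply is_lim_scal_l, Hf.
Qed.

Lemma is_lim_neg_scal (a : R) : 0 < a -> is_lim (fun t => - (a * t)) p_infty m_infty.
Proof.
  intros Ha P [M HM]. exists (- M / a). intros t Ht. apply HM.
  assert (Hat : a * (- M / a) < a * t) by (apply Rmult_lt_compat_l; lra).
  replace (a * (- M / a)) with (- M) in Hat by (field; lra). lra.
Qed.

Lemma is_lim_exp_neg (a : R) : 0 < a -> is_lim (fun t => exp (- (a * t))) p_infty 0.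
Proof.
  intros Ha. apply (is_lim_comp exp _ p_infty 0 m_infty is_lim_exp_m (is_lim_neg_scal a Ha)).
  exists 0. intros t _. discriminate.
Qed.

Lemma is_lim_mul_exp_neg (a : R) : 0 < a -> is_lim (fun t => t * exp (- (a * t))) p_infty 0.
Proof.
  intros Ha.
  apply (is_lim_ext (fun t => (- / a) * ((- (a * t)) * exp (- (a * t))))).
  { intros t. field. lra. }
  apply is_lim_scal_l_0.
  apply (is_lim_comp (fun y => y * exp y) _ p_infty 0 m_infty is_lim_mul_exp_m
           (is_lim_neg_scal a Ha)).
  exists 0. intros t _. discriminate.
Qed.

(** * Filtering signals given on the half-line *)

(* Signals are only given on [0, +oo); extending them by their value at 0 lets the
   calculus of Coquelicot, which works with functions continuous on all of R, apply. *)
Definition extend0 (f : R -> C) (t : R) : C := f (Rmax t 0).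

Lemma extend0_id (f : R -> C) (t : R) : 0 <= t -> extend0 f t = f t.
Proof. intros Ht. unfold extend0. now rewrite Rmax_left. Qed.

Lemma continuous_extend0 (f : R -> C) (x : R) :
  (forall t, 0 <= t -> cont_Rplus f t) -> continuous (extend0 f) x.
Proof.
  intros Hf P HP. destruct (Hf (Rmax x 0) (Rmax_r x 0) P HP) as [eps He].
  exists eps. intros t Ht. apply He; [|apply Rmax_r].
  apply (Rle_lt_trans _ (abs (minus t x))); [|exact Ht].
  unfold abs, minus, plus, opp; simpl. unfold Rmax.
  destruct (Rle_dec t 0), (Rle_dec x 0); unfold Rabs; repeat destruct Rcase_abs; lra.
Qed.

Lemma is_derive_extend0 (f f' : R -> C) (s : R) :
  0 < s -> is_derive f s (f' s) -> is_derive (extend0 f) s (extend0 f' s).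
Proof.
  intros Hs Hf. rewrite extend0_id by lra. apply (is_derive_ext_loc f); [|exact Hf].
  exists (mkposreal _ Hs). intros t Ht. apply Rabs_lt_between' in Ht. simpl in Ht.
  symmetry. apply extend0_id. lra.
Qed.

Lemma filt_extend0 (K f : R -> C) (t : R) : 0 <= t -> filt K f t = filt K (extend0 f) t.
Proof.
  intros Ht. apply (RInt_ext (V := C_R_CompleteNormedModule)). intros u Hu.
  rewrite Rmin_left in Hu by lra. now rewrite extend0_id by lra.
Qed.

Lemma filt_ibp (K K' G G' : R -> C) (t : R) : 0 <= t ->
  (forall s, is_derive K s (K' s)) -> (forall s, continuous K' s) ->
  (forall s, 0 < s -> is_derive G s (G' s)) ->
  (forall s, 0 <= s -> cont_Rplus G s) -> (forall s, 0 <= s -> cont_Rplus G' s) ->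
  filt K G' t = (K 0 * G t - K t * G 0 + filt K' G t)%C.
Proof.
  intros Ht HK HK'c HG HGc HG'c.
  rewrite (filt_extend0 K G'), (filt_extend0 K' G), <- (extend0_id G t), <- (extend0_id G 0)
    by lra.
  set (G0 := extend0 G). set (G1 := extend0 G').
  assert (HG0c : forall s, continuous G0 s) by (intros; apply continuous_extend0; auto).
  assert (HG1c : forall s, continuous G1 s) by (intros; apply continuous_extend0; auto).
  assert (HKc : forall s, continuous K s)
    by (intros s; apply (is_derive_continuous_C _ _ _ (HK s))).
  assert (by_parts : is_RInt (fun u => - K' (t - u)%R * G0 u + K (t - u)%R * G1 u)%C 0 t
                       (K 0 * G0 t - K t * G0 0)%C).
  { replace (K 0) with (K (t - t)) by (f_equal; ring).
    replace (K t) with (K (t - 0)) by (f_equal; ring).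
    apply (is_RInt_derive_left_open (fun u => K (t - u)%R * G0 u)%C); auto.
    - intros x Hx. apply (is_derive_Cmult (fun u => K (t - u)) G0).
      + apply is_derive_reflect, HK.
      + apply is_derive_extend0, HG; lra.
    - intros x. apply (continuous_plus (V := C_R_NormedModule)); apply continuous_Cmult; auto.
      + apply (continuous_opp (V := C_R_NormedModule) (fun u => K' (t - u))).
        apply continuous_reflect; auto.
      + apply continuous_reflect; auto.
    - apply continuous_Cmult; auto. apply continuous_reflect; auto. }
  assert (HK'G : is_RInt (fun u => K' (t - u)%R * G0 u)%C 0 t (filt K' G0 t)).
  { apply RInt_C_correct. intros x. apply continuous_Cmult; auto. apply continuous_reflect; auto. }
  apply RInt_C_unique.
  pose proof (is_RInt_plus _ _ _ _ _ _ by_parts HK'G) as H.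
  eapply is_RInt_ext; [|exact H]. intros u _. set (v := t - u).
  change (- K' v * G0 u + K v * G1 u + K' v * G0 u = K v * G1 u)%C. ring.
Qed.

Lemma Cmod_filt_le (K G : R -> C) (S t : R) : 0 <= t -> (forall s, continuous K s) ->
  (forall s, 0 <= s -> cont_Rplus G s) -> (forall u, 0 <= u -> Cmod (G u) <= S) ->
  Cmod (filt K G t) <= S * RInt (fun s => Cmod (K s)) 0 t.
Proof.
  intros Ht HK HGc HGS. rewrite filt_extend0 by exact Ht.
  apply (Cmod_RInt_le (fun u => K (t - u)%R * extend0 G u)%C (fun u => S * Cmod (K (t - u))) 0 t);
    auto.
  - intros u Hu. rewrite Cmod_mult, extend0_id, Rmult_comm by lra.
    apply Rmult_le_compat_r; [apply Cmod_ge_0 | apply HGS; lra].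
  - apply RInt_C_correct. intros x.
    apply continuous_Cmult; [apply continuous_reflect | apply continuous_extend0]; auto.
  - apply (is_RInt_scal (V := R_NormedModule)), (is_RInt_reflect (fun s => Cmod (K s))).
    apply is_RInt_RInt_Cmod, HK.
Qed.

Lemma Cmod_filt_deriv_le (K K' G G' : R -> C) (S t : R) : 0 <= t ->
  (forall s, is_derive K s (K' s)) -> (forall s, continuous K' s) ->
  (forall s, 0 < s -> is_derive G s (G' s)) ->
  (forall s, 0 <= s -> cont_Rplus G s) -> (forall s, 0 <= s -> cont_Rplus G' s) ->
  (forall u, 0 <= u -> Cmod (G u) <= S) ->
  Cmod (filt K G' t) <=
    Cmod (K 0) * S + Cmod (K t) * Cmod (G 0) + S * RInt (fun s => Cmod (K' s)) 0 t.
Proof.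
  intros Ht HK HK'c HG HGc HG'c HGS. rewrite (filt_ibp K K' G G') by assumption.
  pose proof (Cmod_filt_le K' G S t Ht HK'c HGc HGS) as HI.
  pose proof (HGS t Ht) as HGt.
  pose proof (Cmod_ge_0 (K 0)).
  unfold Cminus. eapply Rle_trans; [apply Cmod_triangle|].
  eapply Rle_trans; [apply Rplus_le_compat_r, Cmod_triangle|].
  rewrite Cmod_opp, !Cmod_mult. nra.
Qed.

(** * First-order filters *)

Lemma Cexp_add (z w : C) : Cexp (z + w) = (Cexp z * Cexp w)%C.
Proof.
  destruct z as [a b], w as [c d]. unfold Cexp, Cplus, Cmult; simpl.
  rewrite exp_plus, cos_plus, sin_plus. apply injective_projections; simpl; ring.
Qed.

Lemma Cexp_0 : Cexp 0 = 1.
Proof.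
  unfold Cexp; simpl. rewrite exp_0, cos_0, sin_0.
  apply injective_projections; simpl; ring.
Qed.

Lemma Cmod_Cexp (z : C) : Cmod (Cexp z) = exp (fst z).
Proof.
  destruct z as [a b]. unfold Cmod, Cexp; simpl.
  replace ((exp a * cos b) * ((exp a * cos b) * 1) + (exp a * sin b) * ((exp a * sin b) * 1))
    with (exp a * exp a) by (pose proof (sin2_cos2 b); unfold Rsqr in *; nra).
  apply sqrt_square. left; apply exp_pos.
Qed.

Lemma is_derive_Cexp_scal (z : C) (t : R) :
  is_derive (fun s : R => Cexp (s * z)%C) t (z * Cexp (t * z))%C.
Proof.
  destruct z as [x y]. apply is_derive_C; unfold Cexp, Cmult; simpl.
  split; auto_derive; auto; unfold Rminus; ring.
Qed.

Lemma continuous_Cexp_scal (z : C) (t : R) : continuous (fun s : R => Cexp (s * z)%C) t.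
Proof. exact (is_derive_continuous_C _ _ _ (is_derive_Cexp_scal z t)). Qed.

Lemma impulse1_eq (gam : C) (t : R) : impulse1 gam t = (gam * Cexp (t * - gam))%C.
Proof. unfold impulse1. rewrite RtoC_opp. do 2 f_equal. ring. Qed.

Lemma impulse1_0 (gam : C) : impulse1 gam 0 = gam.
Proof. rewrite impulse1_eq. replace (0 * - gam)%C with (RtoC 0) by ring. rewrite Cexp_0. ring. Qed.

Lemma Cmod_impulse1 (gam : C) (t : R) :
  Cmod (impulse1 gam t) = Cmod gam * exp (- (fst gam * t)).
Proof.
  unfold impulse1. rewrite Cmod_mult, Cmod_Cexp. do 2 f_equal. simpl. ring.
Qed.

Lemma is_derive_impulse1 (gam : C) (t : R) :
  is_derive (impulse1 gam) t (- gam * impulse1 gam t)%C.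
Proof.
  apply (is_derive_ext (V := C_R_NormedModule) (fun s => gam * Cexp (s * - gam))%C).
  { intros s. symmetry. apply impulse1_eq. }
  rewrite impulse1_eq, Cmult_assoc, (Cmult_comm (- gam)), <- Cmult_assoc.
  apply is_derive_Cmult_l, is_derive_Cexp_scal.
Qed.

Lemma continuous_impulse1 (gam : C) (t : R) : continuous (impulse1 gam) t.
Proof. exact (is_derive_continuous_C _ _ _ (is_derive_impulse1 gam t)). Qed.

Lemma is_lim_Cmod_impulse1 (gam : C) : 0 < fst gam ->
  is_lim (fun t => Cmod (impulse1 gam t)) p_infty 0.
Proof.
  intros Hgam. apply (is_lim_ext (fun t => Cmod gam * exp (- (fst gam * t)))).
  { intros t. symmetry. apply Cmod_impulse1. }
  apply is_lim_scal_l_0, is_lim_exp_neg, Hgam.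
Qed.

Lemma is_RInt_gen_Cmod_impulse1 (gam : C) : 0 < fst gam ->
  is_RInt_gen (fun t => Cmod (impulse1 gam t)) (at_point 0) (Rbar_locally p_infty)
    (Cmod gam / fst gam).
Proof.
  intros Hgam. set (a := fst gam) in *.
  set (F := fun t => - (Cmod gam / a) * exp (- (a * t))).
  assert (HF : forall t, is_derive F t (Cmod (impulse1 gam t))).
  { intros t. rewrite Cmod_impulse1. unfold F. auto_derive; auto. fold a. field. lra. }
  apply (is_RInt_gen_ext (Derive F)).
  { apply filter_forall. intros ab t _. apply is_derive_unique, HF. }
  replace (Cmod gam / a) with (0 - F 0)
    by (unfold F; rewrite Rmult_0_r, Ropp_0, exp_0; field; lra).
  apply is_RInt_gen_Derive.
  - apply filter_forall. intros ab t _. eexists; apply HF.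
  - apply filter_forall. intros ab t _.
    apply (continuous_ext (fun t => Cmod (impulse1 gam t))).
    { intros s. symmetry. apply is_derive_unique, HF. }
    apply continuous_Cmod, continuous_impulse1.
  - intros P HP. exact (locally_singleton (F 0) P HP).
  - change (is_lim F p_infty 0).
    apply is_lim_scal_l_0, is_lim_exp_neg, Hgam.
Qed.

Lemma L1norm_impulse1 (gam : C) : 0 < fst gam -> L1norm (impulse1 gam) = Cmod gam / fst gam.
Proof. intros Hgam. apply L1norm_eq, is_RInt_gen_Cmod_impulse1, Hgam. Qed.

Lemma RInt_Cmod_impulse1_le (gam : C) (T : R) : 0 < fst gam -> 0 <= T ->
  RInt (fun t => Cmod (impulse1 gam t)) 0 T <= L1norm (impulse1 gam).
Proof.
  intros Hgam. apply (RInt_Cmod_le_L1norm _ (Cmod gam / fst gam)).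
  - apply continuous_impulse1.
  - apply is_RInt_gen_Cmod_impulse1, Hgam.
Qed.

Lemma conv_0 (f g : R -> C) : conv f g 0 = 0.
Proof. unfold conv. now rewrite RInt_point. Qed.

Lemma conv_comm (f g : R -> C) (s : R) :
  (forall x, continuous f x) -> (forall x, continuous g x) -> conv f g s = conv g f s.
Proof.
  intros Hf Hg. unfold conv. symmetry. apply RInt_C_unique.
  apply (is_RInt_ext (fun u => f (s - (s - u))%R * g (s - u)%R)%C).
  { intros u _. replace (s - (s - u)) with u by ring. apply Cmult_comm. }
  apply (is_RInt_reflect (fun u => f (s - u)%R * g u)%C), RInt_C_correct.
  intros x. apply continuous_Cmult; [apply continuous_reflect|]; auto.
Qed.

Lemma conv_impulse1_l (gam : C) (f : R -> C) (s : R) : (forall x, continuous f x) ->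
  conv (impulse1 gam) f s =
    (impulse1 gam s * @RInt C_R_CompleteNormedModule (fun u : R => Cexp (u * gam) * f u)%C 0 s)%C.
Proof.
  intros Hf. unfold conv. apply RInt_C_unique.
  apply (is_RInt_ext (fun u : R => impulse1 gam s * (Cexp (u * gam) * f u)))%C.
  { intros u _. rewrite !impulse1_eq, Cmult_assoc, <- (Cmult_assoc gam), <- Cexp_add.
    do 3 f_equal. rewrite RtoC_minus. ring. }
  apply is_RInt_Cmult_l, RInt_C_correct. intros x.
  apply continuous_Cmult; [apply continuous_Cexp_scal | auto].
Qed.

Lemma is_derive_conv_impulse1 (gam : C) (f : R -> C) (s : R) : (forall x, continuous f x) ->
  is_derive (conv (impulse1 gam) f) s (gam * (f s - conv (impulse1 gam) f s))%C.
Proof.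
  intros Hf.
  set (I := fun b => @RInt C_R_CompleteNormedModule (fun u : R => Cexp (u * gam) * f u)%C 0 b).
  assert (HIc : forall x, continuous (fun u : R => Cexp (u * gam) * f u)%C x).
  { intros x. apply continuous_Cmult; [apply continuous_Cexp_scal | auto]. }
  apply (is_derive_ext (V := C_R_NormedModule) (fun b => impulse1 gam b * I b)%C).
  { intros b. symmetry. apply conv_impulse1_l, Hf. }
  eapply is_derive_eq.
  - apply is_derive_Cmult; [apply is_derive_impulse1|].
    apply (is_derive_RInt (fun u : R => Cexp (u * gam) * f u)%C I 0); auto.
    apply filter_forall. intros b. apply RInt_C_correct, HIc.
  - rewrite (conv_impulse1_l gam f s Hf). fold (I s).
    rewrite impulse1_eq.
    assert (E : (Cexp (s * - gam) * Cexp (s * gam))%C = 1)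
      by (rewrite <- Cexp_add, <- Cexp_0; f_equal; ring).
    replace (gam * Cexp (s * - gam) * (Cexp (s * gam) * f s))%C
      with (gam * (Cexp (s * - gam) * Cexp (s * gam)) * f s)%C by ring.
    (* [ring] needs the equation stated in [C] rather than in the normed-module carrier *)
    rewrite E. refine (_ : @eq C _ _). ring.
Qed.

(** * The second-order filter h = h^1 * h^2 *)

Section SecondOrderKernel.

Variables gam1 gam2 : C.

Local Notation h1 := (impulse1 gam1).
Local Notation h2 := (impulse1 gam2).
Local Notation h := (conv (impulse1 gam1) (impulse1 gam2)).
Local Notation a := (Rmin (fst gam1) (fst gam2)).

Definition dh (t : R) : C := (gam1 * (h2 t - h t))%C.
Definition d2h (t : R) : C := (- (gam1 * gam2) * (h1 t + h2 t - h t))%C.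

Lemma is_derive_h (s : R) : is_derive h s (dh s).
Proof. apply is_derive_conv_impulse1, continuous_impulse1. Qed.

Lemma continuous_h (s : R) : continuous h s.
Proof. exact (is_derive_continuous_C _ _ _ (is_derive_h s)). Qed.

Lemma is_derive_dh (s : R) : is_derive dh s (d2h s).
Proof.
  assert (h_sym : forall t, h t = conv h2 h1 t)
    by (intros t; apply conv_comm; apply continuous_impulse1).
  assert (Hh : is_derive h s (gam2 * (h1 s - h s))%C).
  { apply (is_derive_ext (V := C_R_NormedModule) (conv h2 h1)); [intros t; now rewrite h_sym|].
    rewrite h_sym. apply is_derive_conv_impulse1, continuous_impulse1. }
  eapply is_derive_eq.
  - apply is_derive_Cmult_l, (is_derive_minus (V := C_R_NormedModule));
      [apply is_derive_impulse1 | exact Hh].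
  - unfold d2h. change (gam1 * (- gam2 * h2 s - gam2 * (h1 s - h s))
      = - (gam1 * gam2) * (h1 s + h2 s - h s))%C. ring.
Qed.

Lemma continuous_dh (s : R) : continuous dh s.
Proof. exact (is_derive_continuous_C _ _ _ (is_derive_dh s)). Qed.

Lemma continuous_d2h (s : R) : continuous d2h s.
Proof.
  apply continuous_Cmult; [apply continuous_const|].
  apply (continuous_minus (V := C_R_NormedModule)); [|apply continuous_h].
  apply (continuous_plus (V := C_R_NormedModule)); apply continuous_impulse1.
Qed.

Lemma dh_0 : dh 0 = (gam1 * gam2)%C.
Proof. unfold dh. rewrite conv_0, impulse1_0. ring. Qed.

Lemma Cmod_dh_le (s : R) : Cmod (dh s) <= Cmod gam1 * (Cmod (h2 s) + Cmod (h s)).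
Proof.
  unfold dh. rewrite Cmod_mult. apply Rmult_le_compat_l; [apply Cmod_ge_0|].
  unfold Cminus. rewrite <- (Cmod_opp (h s)). apply Cmod_triangle.
Qed.

Lemma Cmod_d2h_le (s : R) :
  Cmod (d2h s) <= Cmod (gam1 * gam2) * (Cmod (h1 s) + Cmod (h2 s) + Cmod (h s)).
Proof.
  unfold d2h. rewrite Cmod_mult, Cmod_opp. apply Rmult_le_compat_l; [apply Cmod_ge_0|].
  unfold Cminus. rewrite <- (Cmod_opp (h s)).
  eapply Rle_trans; [apply Cmod_triangle|].
  apply Rplus_le_compat_r, Cmod_triangle.
Qed.

Lemma Cmod_h_le (s : R) : 0 <= s ->
  Cmod (h s) <= Cmod gam1 * Cmod gam2 * (s * exp (- (a * s))).
Proof.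
  intros Hs. pose proof (Rmin_l (fst gam1) (fst gam2)). pose proof (Rmin_r (fst gam1) (fst gam2)).
  pose proof (Cmod_ge_0 gam1). pose proof (Cmod_ge_0 gam2).
  eapply Rle_trans.
  - apply (Cmod_RInt_le (fun u => h1 (s - u)%R * h2 u)%C
             (fun _ => Cmod gam1 * Cmod gam2 * exp (- (a * s))) 0 s _ _ Hs).
    + intros u Hu. rewrite Cmod_mult, !Cmod_impulse1.
      assert (exp (- (fst gam1 * (s - u))) * exp (- (fst gam2 * u)) <= exp (- (a * s))).
      { rewrite <- exp_plus. apply Rnot_lt_le. intros Hlt%exp_lt_inv. nra. }
      replace (_ * (_ * _)) with (Cmod gam1 * Cmod gam2
        * (exp (- (fst gam1 * (s - u))) * exp (- (fst gam2 * u)))) by ring.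
      apply Rmult_le_compat_l; [nra | assumption].
    + apply RInt_C_correct. intros x.
      apply continuous_Cmult; [apply continuous_reflect |]; apply continuous_impulse1.
    + apply (is_RInt_const (V := R_NormedModule)).
  - right. unfold scal; simpl; unfold mult; simpl. ring.
Qed.

Hypothesis Hre1 : 0 < fst gam1.
Hypothesis Hre2 : 0 < fst gam2.

Lemma Rmin_re_pos : 0 < a.
Proof. apply Rmin_pos; assumption. Qed.

Lemma is_lim_Cmod_h : is_lim (fun t => Cmod (h t)) p_infty 0.
Proof.
  apply (is_lim_le_le_loc (fun _ => 0)
           (fun t => Cmod gam1 * Cmod gam2 * (t * exp (- (a * t))))).
  - exists 0. intros t Ht. split; [apply Cmod_ge_0 | apply Cmod_h_le; lra].
  - apply is_lim_const.
  - apply is_lim_scal_l_0, is_lim_mul_exp_neg, Rmin_re_pos.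
Qed.

Lemma is_lim_Cmod_dh : is_lim (fun t => Cmod (dh t)) p_infty 0.
Proof.
  apply (is_lim_le_le_loc (fun _ => 0) (fun t => Cmod gam1 * (Cmod (h2 t) + Cmod (h t)))).
  - exists 0. intros t _. split; [apply Cmod_ge_0 | apply Cmod_dh_le].
  - apply is_lim_const.
  - apply is_lim_scal_l_0. rewrite <- (Rplus_0_r 0).
    apply is_lim_plus'; [apply is_lim_Cmod_impulse1, Hre2 | apply is_lim_Cmod_h].
Qed.

Lemma is_RInt_gen_Cmod_h : exists L,
  is_RInt_gen (fun t => Cmod (h t)) (at_point 0) (Rbar_locally p_infty) L /\
  L <= Cmod gam1 * Cmod gam2 / a ^ 2.
Proof.
  pose proof Rmin_re_pos as Ha.
  set (K := Cmod gam1 * Cmod gam2).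
  assert (HK : 0 <= K) by (apply Rmult_le_pos; apply Cmod_ge_0).
  apply is_RInt_gen_nonneg_bounded.
  - intros x. apply continuous_Cmod, continuous_h.
  - intros x _. apply Cmod_ge_0.
  - intros T HT.
    set (F := fun s => - K * (s / a + / a ^ 2) * exp (- (a * s))).
    assert (HF : forall s, is_derive F s (K * (s * exp (- (a * s))))).
    { intros s. unfold F. auto_derive; auto. field. lra. }
    apply (Rle_trans _ (F T - F 0)).
    + apply (is_RInt_le (fun t => Cmod (h t)) (fun s => K * (s * exp (- (a * s)))) 0 T);
        [exact HT | | | intros x Hx; apply Cmod_h_le; lra].
      * apply (RInt_correct (V := R_CompleteNormedModule)), ex_RInt_continuous_R.
        intros x. apply continuous_Cmod, continuous_h.
      * apply (is_RInt_derive (V := R_CompleteNormedModule) F); [intros; apply HF|].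
        intros x _. apply (ex_derive_continuous (V := R_NormedModule)). auto_derive. auto.
    + unfold F. rewrite Rmult_0_r, Ropp_0, exp_0.
      assert (0 <= K * (T / a + / a ^ 2) * exp (- (a * T))).
      { apply Rmult_le_pos; [apply Rmult_le_pos; [exact HK|] | left; apply exp_pos].
        assert (0 < / a ^ 2) by (apply Rinv_0_lt_compat, pow_lt, Ha).
        assert (0 <= T / a) by (apply Rdiv_le_0_compat; lra). lra. }
      replace (K / a ^ 2) with (- (- K * (0 / a + / a ^ 2) * 1)) by (field; lra). lra.
Qed.

Lemma L1norm_h_le : L1norm h <= Cmod gam1 * Cmod gam2 / a ^ 2.
Proof. destruct is_RInt_gen_Cmod_h as [L [HL HLB]]. now rewrite (L1norm_eq _ _ HL). Qed.

Lemma RInt_Cmod_h_le (T : R) : 0 <= T -> RInt (fun t => Cmod (h t)) 0 T <= L1norm h.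
Proof.
  destruct is_RInt_gen_Cmod_h as [L [HL _]].
  apply (RInt_Cmod_le_L1norm _ L); [exact continuous_h | exact HL].
Qed.

Lemma RInt_Cmod_dh_le (t : R) : 0 <= t ->
  RInt (fun s => Cmod (dh s)) 0 t <= Cmod gam1 * (L1norm h2 + L1norm h).
Proof.
  intros Ht. eapply Rle_trans.
  - apply (is_RInt_le _ _ 0 t _ _ Ht (is_RInt_RInt_Cmod dh t continuous_dh)
      (is_RInt_scal _ _ _ (Cmod gam1) _ (is_RInt_plus _ _ _ _ _ _
         (is_RInt_RInt_Cmod h2 t (continuous_impulse1 gam2))
         (is_RInt_RInt_Cmod h t continuous_h)))).
    intros x _. apply Cmod_dh_le.
  - apply Rmult_le_compat_l; [apply Cmod_ge_0|].
    apply Rplus_le_compat; [apply RInt_Cmod_impulse1_le | apply RInt_Cmod_h_le]; assumption.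
Qed.

Lemma RInt_Cmod_d2h_le (t : R) : 0 <= t ->
  RInt (fun s => Cmod (d2h s)) 0 t <=
    Cmod (gam1 * gam2) * (L1norm h1 + L1norm h2 + L1norm h).
Proof.
  intros Ht. eapply Rle_trans.
  - apply (is_RInt_le _ _ 0 t _ _ Ht (is_RInt_RInt_Cmod d2h t continuous_d2h)
      (is_RInt_scal _ _ _ (Cmod (gam1 * gam2)) _ (is_RInt_plus _ _ _ _ _ _
         (is_RInt_plus _ _ _ _ _ _
            (is_RInt_RInt_Cmod h1 t (continuous_impulse1 gam1))
            (is_RInt_RInt_Cmod h2 t (continuous_impulse1 gam2)))
         (is_RInt_RInt_Cmod h t continuous_h)))).
    intros x _. apply Cmod_d2h_le.
  - apply Rmult_le_compat_l; [apply Cmod_ge_0|].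
    repeat apply Rplus_le_compat;
      [apply RInt_Cmod_impulse1_le | apply RInt_Cmod_impulse1_le | apply RInt_Cmod_h_le];
      assumption.
Qed.

Lemma filt_h_deriv1_le (g g' : R -> C) :
  (forall t, 0 < t -> is_derive g t (g' t)) ->
  (forall t, 0 <= t -> cont_Rplus g t) -> (forall t, 0 <= t -> cont_Rplus g' t) ->
  (exists M, forall t, 0 <= t -> Cmod (g t) <= M) ->
  exists eps : R -> R, is_lim eps p_infty 0 /\
    forall t, 0 <= t ->
      Cmod (filt h g' t) <= Cmod gam1 * (L1norm h2 + L1norm h) * supnorm g + eps t.
Proof.
  intros Hg Hgc Hg'c [M HM].
  pose proof (supnorm_ub g M HM) as HS. pose proof (supnorm_ge0 g M HM) as HS0.
  exists (fun t => Cmod (g 0) * Cmod (h t)). split.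
  - apply is_lim_scal_l_0, is_lim_Cmod_h.
  - intros t Ht.
    eapply Rle_trans;
      [apply (Cmod_filt_deriv_le h dh g g'); eauto using is_derive_h, continuous_dh|].
    rewrite conv_0, Cmod_0.
    pose proof (RInt_Cmod_dh_le t Ht). pose proof (Cmod_ge_0 (g 0)). nra.
Qed.

Lemma filt_h_deriv2_le (g g' g'' : R -> C) :
  (forall t, 0 < t -> is_derive g t (g' t)) -> (forall t, 0 < t -> is_derive g' t (g'' t)) ->
  (forall t, 0 <= t -> cont_Rplus g t) -> (forall t, 0 <= t -> cont_Rplus g' t) ->
  (forall t, 0 <= t -> cont_Rplus g'' t) ->
  (exists M, forall t, 0 <= t -> Cmod (g t) <= M) ->
  exists eps : R -> R, is_lim eps p_infty 0 /\
    forall t, 0 <= t ->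
      Cmod (filt h g'' t) <=
        Cmod (gam1 * gam2) * (1 + L1norm h1 + L1norm h2 + L1norm h) * supnorm g + eps t.
Proof.
  intros Hg Hg' Hgc Hg'c Hg''c [M HM].
  pose proof (supnorm_ub g M HM) as HS. pose proof (supnorm_ge0 g M HM) as HS0.
  exists (fun t => Cmod (g' 0) * Cmod (h t) + Cmod (g 0) * Cmod (dh t)). split.
  - rewrite <- (Rplus_0_r 0).
    apply is_lim_plus'; apply is_lim_scal_l_0; [apply is_lim_Cmod_h | apply is_lim_Cmod_dh].
  - intros t Ht.
    rewrite (filt_ibp h dh g' g'') by auto using is_derive_h, continuous_dh.
    rewrite conv_0.
    replace (0 * g' t - h t * g' 0 + filt dh g' t)%C with (- (h t * g' 0) + filt dh g' t)%C
      by ring.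
    eapply Rle_trans; [apply Cmod_triangle|]. rewrite Cmod_opp, Cmod_mult.
    eapply Rle_trans; [apply Rplus_le_compat_l, (Cmod_filt_deriv_le dh d2h g g');
                       eauto using is_derive_dh, continuous_d2h|].
    rewrite dh_0.
    pose proof (RInt_Cmod_d2h_le t Ht). pose proof (Cmod_ge_0 (g 0)). pose proof (Cmod_ge_0 (g' 0)).
    pose proof (Cmod_ge_0 (h t)). pose proof (Cmod_ge_0 (gam1 * gam2)). nra.
Qed.

End SecondOrderKernel.

(** * The case of a damping ratio 0 < ζ ≤ 1 *)

Lemma roots_second_order (gam1 gam2 : C) (gam zeta : R) : 0 < gam -> 0 < zeta <= 1 ->
  (gam1 + gam2)%C = RtoC (2 * zeta * gam) -> (gam1 * gam2)%C = RtoC (gam ^ 2) ->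
  fst gam1 = zeta * gam /\ fst gam2 = zeta * gam /\ Cmod gam1 = gam /\ Cmod gam2 = gam.
Proof.
  intros Hgam Hzeta Hsum Hprod.
  destruct gam1 as [x1 y1], gam2 as [x2 y2].
  apply (f_equal fst) in Hsum as Hs1. apply (f_equal snd) in Hsum as Hs2.
  apply (f_equal fst) in Hprod as Hp1. apply (f_equal snd) in Hprod as Hp2.
  simpl in Hs1, Hs2, Hp1, Hp2. replace y2 with (- y1) in * by lra.
  assert (Hx : x1 = x2).
  { destruct (Req_dec y1 0) as [-> | Hy].
    - assert (Hdisc : (x1 - x2) ^ 2 = 4 * gam ^ 2 * (zeta ^ 2 - 1)).
      { replace ((x1 - x2) ^ 2) with ((x1 + x2) ^ 2 - 4 * (x1 * x2)) by ring.
        replace (x1 * x2) with (gam ^ 2) by (simpl; lra). rewrite Hs1. ring. }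
      assert (Hle : 4 * gam ^ 2 * (zeta ^ 2 - 1) <= 0).
      { assert (zeta ^ 2 <= 1) by nra. pose proof (pow2_ge_0 gam). nra. }
      pose proof (pow2_ge_0 (x1 - x2)).
      apply Rminus_diag_uniq, Rsqr_0_uniq. unfold Rsqr. simpl in *. lra.
    - apply (Rmult_eq_reg_l y1); [nra | exact Hy]. }
  subst x2. simpl.
  assert (Hmod : forall y, y ^ 2 = y1 ^ 2 -> Cmod (x1, y) = gam).
  { intros y Hy. unfold Cmod; simpl. rewrite <- (sqrt_pow2 gam) by lra. f_equal. nra. }
  repeat split; try lra; apply Hmod; ring.
Qed.

Lemma L1norms_second_order (gam1 gam2 : C) (gam zeta : R) :
  0 < fst gam1 -> 0 < fst gam2 -> 0 < gam -> 0 < zeta <= 1 ->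
  (gam1 + gam2)%C = RtoC (2 * zeta * gam) -> (gam1 * gam2)%C = RtoC (gam ^ 2) ->
  L1norm (impulse1 gam2) = L1norm (impulse1 gam1) /\ L1norm (impulse1 gam1) <= 1 / zeta /\
  L1norm (conv (impulse1 gam1) (impulse1 gam2)) <= 1 / zeta ^ 2.
Proof.
  intros Hre1 Hre2 Hgam Hzeta Hsum Hprod.
  destruct (roots_second_order gam1 gam2 gam zeta Hgam Hzeta Hsum Hprod)
    as [Hx1 [Hx2 [Hm1 Hm2]]].
  pose proof (L1norm_h_le gam1 gam2 Hre1 Hre2) as Hh.
  rewrite Hx1, Hx2, Hm1, Hm2, Rmin_left in Hh by lra.
  rewrite !L1norm_impulse1, Hx1, Hx2, Hm1, Hm2 by assumption.
  repeat split.
  - right. field. lra.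
  - eapply Rle_trans; [exact Hh | right; field; lra].
Qed.

Theorem propositionA8 (gam1 gam2 : C)
  (Hre1 : 0 < fst gam1) (Hre2 : 0 < fst gam2) :
  let h1 := impulse1 gam1 in
  let h2 := impulse1 gam2 in
  let h := conv h1 h2 in
  (forall g g1 g2 : R -> C,
     (* g1 = g', g2 = g'' on R_+, all continuous on R_+ (g is C^2 on R_+) *)
     (forall t, 0 < t -> is_derive g t (g1 t)) ->
     (forall t, 0 < t -> is_derive g1 t (g2 t)) ->
     (forall t, 0 <= t -> cont_Rplus g t) ->
     (forall t, 0 <= t -> cont_Rplus g1 t) ->
     (forall t, 0 <= t -> cont_Rplus g2 t) ->
     (* g bounded on R_+ *)
     (exists M, forall t, 0 <= t -> Cmod (g t) <= M) ->
     (exists eps : R -> R, is_lim eps p_infty 0 /\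
        forall t, 0 <= t ->
          Cmod (filt h g1 t) <=
            Cmod gam1 * (L1norm h2 + L1norm h) * supnorm g + eps t) /\
     (exists eps : R -> R, is_lim eps p_infty 0 /\
        forall t, 0 <= t ->
          Cmod (filt h g2 t) <=
            Cmod (Cmult gam1 gam2) * (1 + L1norm h1 + L1norm h2 + L1norm h)
              * supnorm g + eps t)) /\
  (forall gam zeta : R, 0 < gam -> 0 < zeta <= 1 ->
     (* -gam1, -gam2 are the roots of s^2 + 2 zeta gam s + gam^2 *)
     Cplus gam1 gam2 = RtoC (2 * zeta * gam) ->
     Cmult gam1 gam2 = RtoC (gam ^ 2) ->
     L1norm h2 = L1norm h1 /\ L1norm h1 <= 1 / zeta /\
     L1norm h <= 1 / zeta ^ 2).
Proof.
  intros h1 h2 h. split.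
  - intros g g1 g2 Hg Hg1 Hgc Hg1c Hg2c Hbounded. split.
    + exact (filt_h_deriv1_le gam1 gam2 Hre1 Hre2 g g1 Hg Hgc Hg1c Hbounded).
    + exact (filt_h_deriv2_le gam1 gam2 Hre1 Hre2 g g1 g2 Hg Hg1 Hgc Hg1c Hg2c Hbounded).
  - intros gam zeta. exact (L1norms_second_order gam1 gam2 gam zeta Hre1 Hre2).
Qed.
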